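(* Let $H=(V,E)$ be an uncapacitated hypergraph, let $v_1,\ldots,v_n$ be an MA-ordering of $H$, fix a head ordering of the edges induced by it, let $k$ be a non-negative integer, and let $H_k$ be the hypergraph constructed from $H$ with respect to this ordering as described in the context. Then for every $A\subseteq V$, $|\delta_{H_k}(A)|\ge \min\{k,|\delta_H(A)|\}$.
   Context: A hypergraph $H=(V,E)$ has a finite vertex set $V$ and a finite multiset $E$ of edges, each a subset of $V$; uncapacitated means all edges have capacity $1$ (parallel edges allowed). For $S\subseteq V$, $\delta_H(S)$ is the set (multiset) of edges meeting both $S$ and $V\setminus S$. For subsets $A_1,\ldots,A_k\subseteq V$, $d(A_1,\ldots,A_k)$ is the number of edges that intersect every $A_i$; a single vertex $v$ stands for $\{v\}$. For an ordering $v_1,\ldots,v_n$ of $V$ let $V_i=\{v_1,\ldots,v_i\}$ ($V_0=\emptyset$). The ordering is an MA-ordering if $d(V_{i-1},v_i)\ge d(V_{i-1},v_j)$ for all $1\le i<j\le n$. The head $h(e)$ of an edge $e$ is the vertex of $e$ with smallest index. An ordering $e_1,\ldots,e_m$ of the edges is a head ordering if the index of $h(e_i)$ is non-decreasing in $i$. An edge $e$ is a backward edge of $v$ if $v\in e$ and $h(e)\ne v$. $D_k(v)$ denotes the first $k$ backward edges of $v$ in the head ordering (all of them if $v$ has fewer than $k$). For each $e\in E$ let $e'=\{v\in e : e\in D_k(v)\}\cup\{h(e)\}$, and let $H_k=(V,E_k)$ with $E_k$ the multiset $\{e' : e\in E,\ |e'|\ge 2\}$. *)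

From mathcomp Require Import all_boot.
Set Implicit Arguments. Unset Strict Implicit. Unset Printing Implicit Defensive.

Section Hyper.
Variable V : finType.

(* A hypergraph: the multiset of edges is a sequence E : seq {set V}.
   Edge "e_p" is the edge at position p; the order of the sequence is the
   chosen edge ordering (used for the head ordering). *)

Definition vidx (vs : seq V) (v : V) : nat := index v vs.

Definition Vpre (vs : seq V) (i : nat) : {set V} := [set x | vidx vs x < i].

Definition d2 (E : seq {set V}) (A B : {set V}) : nat :=
  count (fun e => (e :&: A != set0) && (e :&: B != set0)) E.

(* MA-ordering: d(V_{i-1}, v_i) >= d(V_{i-1}, v_j) for all 1 <= i < j <= n
   (0-based here: for i < j < n, d(V_i, vs_i) >= d(V_i, vs_j)). *)
Definition MA_ordering (E : seq {set V}) (vs : seq V) : Prop :=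
  forall i j, i < j -> j < size vs ->
    d2 E (Vpre vs i) [set x | vidx vs x == i] >=
    d2 E (Vpre vs i) [set x | vidx vs x == j].

Definition is_head (vs : seq V) (v : V) (e : {set V}) : bool :=
  (v \in e) && [forall u in e, vidx vs v <= vidx vs u].

Definition head_idx (vs : seq V) (e : {set V}) : nat :=
  \big[minn/size vs]_(u in e) vidx vs u.

(* head ordering: head indices non-decreasing along the edge sequence
   (empty edges have no head and are ignored) *)
Definition head_ordering (vs : seq V) (E : seq {set V}) : Prop :=
  sorted leq [seq head_idx vs e | e <- E & e != set0].

Definition backward (vs : seq V) (E : seq {set V}) (v : V) : seq nat :=
  [seq p <- iota 0 (size E) |
     (v \in nth set0 E p) && ~~ is_head vs v (nth set0 E p)].

Definition Dk (k : nat) (vs : seq V) (E : seq {set V}) (v : V) : seq nat :=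
  take k (backward vs E v).

Definition edge' (k : nat) (vs : seq V) (E : seq {set V}) (p : nat) : {set V} :=
  [set v in nth set0 E p | (p \in Dk k vs E v) || is_head vs v (nth set0 E p)].

Definition Hk (k : nat) (vs : seq V) (E : seq {set V}) : seq {set V} :=
  [seq edge' k vs E p | p <- iota 0 (size E) & 2 <= #|edge' k vs E p|].

Definition cut (E : seq {set V}) (S : {set V}) : nat :=
  count (fun e => (e :&: S != set0) && (e :\: S != set0)) E.

End Hyper.

From mathcomp Require Import all_boot all_order zify.
Set Implicit Arguments. Unset Strict Implicit. Unset Printing Implicit Defensive.
Import Order.TTheory.

(* Only edges of H that cross A while their trace e' does not can make the cut of H_k
   smaller.  Such an edge e contains a vertex w on the other side of A from its head v_j
   that does not keep e, so e is a backward edge of w outside D_k(w); as the head ordering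
   lists the backward edges of w by nondecreasing head, D_k(w) then consists of k edges
   with head at most j.  By induction on j, for every w after v_j on the other side of A
   from v_j, the edges of D_k(w) with head at most j give as many edges of H_k crossing A
   inside V_{j+1} + w: the edges with head exactly j cross through v_j and w, and when
   v_{j-1} is on the side of w, the MA-ordering d(V_j, v_j) >= d(V_j, w) lets v_j
   replace w in the induction hypothesis. *)

Lemma count_lt_succ (T : Type) (f : T -> nat) (s : seq T) t :
  count (fun x => f x < t.+1) s =
  count (fun x => f x < t) s + count (fun x => f x == t) s.
Proof.
elim: s => [|x s IH] //=; rewrite IH ltnS leq_eqVlt.
by case: ltngtP => /=; lia.
Qed.

(* Sorted, so the entries below [t] form a prefix of [s]. *)
Lemma count_lt_take_sorted (s : seq nat) t k : sorted leq s ->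
  count (fun x => x < t) (take k s) = minn k (count (fun x => x < t) s).
Proof.
elim: s k => [|x s IH] [|k] //= sorted_xs; rewrite ?min0n //.
case: ltnP => [x_lt|x_ge] /=; first by rewrite IH ?(path_sorted sorted_xs) // !add1n minnSS.
have high y : y \in s -> (y < t) = false.
  move/(allP (order_path_min leq_trans sorted_xs)) => xy.
  by apply/negbTE; rewrite -leqNgt (leq_trans x_ge).
have none u : {subset u <= s} -> count (fun y => y < t) u = 0.
  by move=> us; apply/eqP; rewrite -leqn0 leqNgt -has_count; apply/hasPn => y /us /high ->.
by rewrite !none ?minn0 // => y /mem_take.
Qed.

Lemma sub_in_count (T : eqType) (a b : pred T) (s : seq T) :
  {in s, forall x, a x -> b x} -> count a s <= count b s.
Proof.
move=> ab; rewrite (eq_in_count (a2 := predI a b)) => [|x xs /=].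
  by apply: sub_count => x /andP[].
by case ax: (a x); rewrite ?(ab x xs ax).
Qed.

Lemma count_add_new (T : eqType) (a b c : pred T) (s t : seq T) :
  subseq t s -> subpred a b -> {in t, forall x, c x -> b x && ~~ a x} ->
  count a s + count c t <= count b s.
Proof.
move=> sub_ts ab new_c.
rewrite -(size_filter b) -(count_predC a (filter b s)) !count_filter.
rewrite (@eq_count _ (predI a b) a) => [|x /=]; last by case: (boolP (a x)) => // /ab ->.
rewrite leq_add2l; apply: leq_trans (leq_count_subseq _ sub_ts).
by apply: sub_in_count => x xt /(new_c x xt) /andP[/= -> ->].
Qed.

Section VertexOrder.
Variables (V : finType) (vs : seq V).
Hypotheses (vs_uniq : uniq vs) (vs_all : forall v : V, v \in vs).

Lemma vidx_lt (v : V) : vidx vs v < size vs.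
Proof. by rewrite /vidx index_mem. Qed.

Lemma vidx_inj : injective (vidx vs).
Proof.
move=> x y eq_xy; rewrite -(nth_index x (vs_all x)) -(nth_index x (vs_all y)).
by congr nth.
Qed.

Lemma vidx_nth x0 i : i < size vs -> vidx vs (nth x0 vs i) = i.
Proof. by move=> i_lt; rewrite /vidx index_uniq. Qed.

Lemma in_Vpre (x : V) i : (x \in Vpre vs i) = (vidx vs x < i).
Proof. by rewrite inE. Qed.

Lemma head_idx_le (e : {set V}) y : y \in e -> head_idx vs e <= vidx vs y.
Proof. by move=> ye; rewrite /head_idx -minEnat; apply: (bigmin_le_cond (T := nat)). Qed.

Lemma head_idx_attained (e : {set V}) y : y \in e ->
  exists2 u, u \in e & head_idx vs e = vidx vs u.
Proof.
move=> ye; rewrite /head_idx -minEnat (bigmin_eq_arg (T := nat) _ y (mem e) _ ye).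
  by case: arg_minP => // u ue _; exists u.
by move=> u _; apply/ltnW/vidx_lt.
Qed.

Lemma is_headE (v : V) (e : {set V}) :
  is_head vs v e = (v \in e) && (vidx vs v == head_idx vs e).
Proof.
rewrite /is_head; case ve: (v \in e) => //=.
apply/forall_inP/eqP => [v_min|->]; last by move=> u; apply: head_idx_le.
have [u ue hu] := head_idx_attained ve.
by apply/eqP; rewrite eqn_leq head_idx_le // andbT hu v_min.
Qed.

Lemma is_head_nth x0 (e : {set V}) y : y \in e -> is_head vs (nth x0 vs (head_idx vs e)) e.
Proof.
move=> ye; have [u ue hu] := head_idx_attained ye.
have -> : nth x0 vs (head_idx vs e) = u by rewrite hu /vidx nth_index.
by rewrite is_headE ue hu eqxx.
Qed.

Lemma meets_Vpre (e : {set V}) i : i <= size vs ->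
  (e :&: Vpre vs i != set0) = (head_idx vs e < i).
Proof.
move=> i_le; apply/set0Pn/idP => [[x /setIP[xe]]|hd_lt].
  by rewrite in_Vpre; apply: leq_ltn_trans (head_idx_le xe).
have /set0Pn[y ye] : e != set0.
  apply/eqP => e0; move: hd_lt; rewrite e0 /head_idx big_pred0 => [|x]; last by rewrite inE.
  by rewrite ltnNge i_le.
by have [u ue hu] := head_idx_attained ye; exists u; rewrite inE ue in_Vpre -hu.
Qed.

Lemma meets_vidx_eq (e : {set V}) w :
  (e :&: [set x | vidx vs x == vidx vs w] != set0) = (w \in e).
Proof.
apply/set0Pn/idP => [[x /setIP[xe]]|we]; last by exists w; rewrite !inE we eqxx.
by rewrite inE => /eqP/vidx_inj <-.
Qed.

End VertexOrder.

Section Crossing.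
Variables (V : finType) (A : {set V}).

Definition crosses (S : {set V}) := (S :&: A != set0) && (S :\: A != set0).

Lemma crossesP (S : {set V}) x y :
  x \in S -> y \in S -> (x \in A) != (y \in A) -> crosses S.
Proof.
move=> xS yS; rewrite /crosses.
case xA: (x \in A); case yA: (y \in A) => //= _; apply/andP; split; apply/set0Pn.
- by exists x; rewrite !inE xS xA.
- by exists y; rewrite !inE yS yA.
- by exists y; rewrite !inE yS yA.
- by exists x; rewrite !inE xS xA.
Qed.

Lemma crossesS (S T : {set V}) : S \subset T -> crosses S -> crosses T.
Proof.
move=> ST /andP[/set0Pn[x /setIP[xS xA]] /set0Pn[y /setDP[yS yA]]].
by apply: (crossesP (subsetP ST x xS) (subsetP ST y yS)); rewrite xA (negbTE yA).
Qed.

Lemma crosses_sub1 (S : {set V}) x : S \subset [set x] -> ~~ crosses S.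
Proof.
move=> Sx; apply/negP => /andP[/set0Pn[y /setIP[yS yA]] /set0Pn[z /setDP[zS zA]]].
by move: (subsetP Sx y yS) (subsetP Sx z zS) yA zA; rewrite !inE => /eqP-> /eqP-> ->.
Qed.

Lemma crosses_card (S : {set V}) : crosses S -> 1 < #|S|.
Proof.
move=> /andP[/set0Pn[y /setIP[yS yA]] /set0Pn[z /setDP[zS zA]]].
have yz : y != z by apply: contraNneq zA => <-.
apply: leq_trans (subset_leq_card (_ : [set y; z] \subset S)); first by rewrite cards2 yz.
by apply/subsetP => x /set2P[]->.
Qed.

End Crossing.

Section HkCut.
Variables (V : finType) (E : seq {set V}) (vs : seq V) (k : nat) (A : {set V}).
Hypotheses (vs_uniq : uniq vs) (vs_all : forall v : V, v \in vs).
Hypotheses (vs_MA : MA_ordering E vs) (E_head : head_ordering vs E).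

Local Notation ed p := (nth set0 E p).
Local Notation ed' p := (edge' k vs E p).
Local Notation hd := (head_idx vs).

Definition trace_cut (X : {set V}) :=
  count (fun p => crosses A (ed' p :&: X)) (iota 0 (size E)).

Definition Dk_before (w : V) t := count (fun p => hd (ed p) < t) (Dk k vs E w).

Definition backward_before (w : V) t := count (fun p => hd (ed p) < t) (backward vs E w).

Lemma in_edge' (v : V) p :
  (v \in ed' p) = (v \in ed p) && ((p \in Dk k vs E v) || is_head vs v (ed p)).
Proof. by rewrite inE. Qed.

Lemma in_backward (v : V) p :
  (p \in backward vs E v) = (p < size E) && (v \in ed p) && ~~ is_head vs v (ed p).
Proof. by rewrite mem_filter mem_iota add0n andbC andbA. Qed.

Lemma backward_heads_sorted w : sorted leq [seq hd (ed p) | p <- backward vs E w].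
Proof.
pose Q (e : {set V}) := (w \in e) && ~~ is_head vs w e.
have -> : [seq hd (ed p) | p <- backward vs E w] = [seq hd e | e <- E & Q e].
  by rewrite -[in RHS](mkseq_nth set0 E) filter_map -map_comp.
apply: (subseq_sorted leq_trans _ E_head); apply: map_subseq.
have -> : [seq e <- E | Q e] = [seq e <- [seq e <- E | e != set0] | Q e].
  rewrite -filter_predI; apply: eq_filter => e /=.
  rewrite /Q; case we: (w \in e) => //=; rewrite ?andbF //.
  by rewrite (_ : e != set0) ?andbT //; apply/set0Pn; exists w.
exact: filter_subseq.
Qed.

Lemma Dk_before_min w t : Dk_before w t = minn k (backward_before w t).
Proof.
by have := count_lt_take_sorted t k (backward_heads_sorted w); rewrite -map_take !count_map.
Qed.

Lemma backward_before_d2 w i : i <= vidx vs w ->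
  backward_before w i = d2 E (Vpre vs i) [set x | vidx vs x == vidx vs w].
Proof.
move=> i_le; rewrite /backward_before /backward count_filter /d2.
rewrite -[in RHS](mkseq_nth set0 E) count_map; apply: eq_count => p /=.
rewrite meets_vidx_eq // meets_Vpre ?(leq_trans i_le (ltnW (vidx_lt _ _))) //.
case: ltnP => //= hd_lt; case we: (w \in ed p) => //=.
by rewrite (is_headE vs_all) we eq_sym ltn_eqF // (leq_trans hd_lt i_le).
Qed.

Lemma Dk_before_MA x0 w j : j < vidx vs w -> Dk_before w j <= Dk_before (nth x0 vs j) j.
Proof.
move=> j_lt; have j_n : j < size vs := ltn_trans j_lt (vidx_lt vs_all w).
rewrite !Dk_before_min !backward_before_d2 ?vidx_nth ?(ltnW j_lt) //.
rewrite leq_min geq_minl /=; apply: leq_trans (geq_minr _ _) _.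
exact: vs_MA (vidx_lt vs_all w).
Qed.

Lemma Dk_before_full w p : p \in backward vs E w -> p \notin Dk k vs E w ->
  k <= Dk_before w (hd (ed p)).+1.
Proof.
move=> p_back p_Dk; rewrite Dk_before_min leq_min leqnn leqNgt; apply/negP => few.
have p_drop : p \in drop k (backward vs E w).
  by move: p_back p_Dk; rewrite /Dk -{1}(cat_take_drop k (backward vs E w)) mem_cat => /orP[->|].
have := Dk_before_min w (hd (ed p)).+1; rewrite (minn_idPr (ltnW few)).
rewrite /Dk_before /backward_before /Dk -[in RHS](cat_take_drop k (backward vs E w)) count_cat.
rewrite -[X in X = _]addn0 => /addnI/esym/eqP; rewrite -leqn0 leqNgt -has_count.
by move=> /hasPn /(_ p p_drop); rewrite ltnSn.
Qed.

Lemma Dk_subseq w : subseq (Dk k vs E w) (iota 0 (size E)).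
Proof. exact: subseq_trans (take_subseq _ _) (filter_subseq _ _). Qed.

Lemma Dk_edge' w p : p \in Dk k vs E w -> w \in ed' p.
Proof.
move=> pD; rewrite in_edge' pD.
by move/mem_take: pD; rewrite in_backward => /andP[/andP[_ ->]].
Qed.

Lemma trace_cutS (X Y : {set V}) : X \subset Y -> trace_cut X <= trace_cut Y.
Proof. by move=> XY; apply: sub_count => p; apply: crossesS; apply: setIS. Qed.

Lemma trace_cut_layer x0 j w z :
  j < vidx vs w -> (nth x0 vs j \in A) != (w \in A) -> z \in Vpre vs j.+1 :|: [set w] ->
  trace_cut (Vpre vs j :|: [set z]) + count (fun p => hd (ed p) == j) (Dk k vs E w)
    <= trace_cut (Vpre vs j.+1 :|: [set w]).
Proof.
move=> j_lt opp z_in; have j_n : j < size vs := ltn_trans j_lt (vidx_lt vs_all w).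
apply: count_add_new (Dk_subseq w) _ _ => [p|p pD /eqP hd_p].
  apply: crossesS; apply: setIS; rewrite subUset sub1set z_in andbT.
  by apply/subsetP => x; rewrite !inE => /ltnW; rewrite ltnS => ->.
have w_ed' := Dk_edge' pD; move: (w_ed'); rewrite in_edge' => /andP[w_ed _].
have u_ed' : nth x0 vs j \in ed' p.
  have u_head := is_head_nth vs_all x0 w_ed; rewrite hd_p in u_head.
  by rewrite in_edge' u_head orbT andbT; case/andP: u_head.
apply/andP; split.
  apply: (crossesP _ _ opp); rewrite in_setI in_setU in_set1 ?in_Vpre.
    by rewrite u_ed' vidx_nth // ltnSn.
  by rewrite w_ed' eqxx orbT.
apply: (@crosses_sub1 _ _ _ z); apply/subsetP => x; rewrite !inE => /andP[/andP[x_ed _]].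
by rewrite ltnNge -hd_p head_idx_le.
Qed.

Lemma Dk_before_le_trace_cut x0 j w :
  j < vidx vs w -> (nth x0 vs j \in A) != (w \in A) ->
  Dk_before w j.+1 <= trace_cut (Vpre vs j.+1 :|: [set w]).
Proof.
elim: j w => [|j IH] w j_lt opp; rewrite /Dk_before count_lt_succ -/(Dk_before w _).
  apply: leq_trans (trace_cut_layer j_lt opp (_ : w \in _)); last by rewrite !inE eqxx orbT.
  by rewrite leq_add2r /Dk_before (@eq_count _ _ pred0) ?count_pred0 // => p; rewrite ltn0.
have j_n : j.+1 < size vs := ltn_trans j_lt (vidx_lt vs_all w).
set u := nth x0 vs j.+1.
case: (boolP ((nth x0 vs j \in A) != (w \in A))) => [opp_prev|same_prev].
  apply: leq_trans (trace_cut_layer j_lt opp (_ : w \in _)); last by rewrite !inE eqxx orbT.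
  by rewrite leq_add2r IH // ltnW.
apply: leq_trans (trace_cut_layer j_lt opp (_ : u \in _)); last first.
  by rewrite in_setU in_Vpre /u vidx_nth // ltnSn.
rewrite leq_add2r; apply: leq_trans (Dk_before_MA x0 j_lt) (IH u _ _).
  by rewrite /u vidx_nth.
by move: same_prev opp; rewrite negbK => /eqP->; rewrite eq_sym.
Qed.

Lemma lost_edge_witness p : p < size E -> crosses A (ed p) -> ~~ crosses A (ed' p) ->
  exists2 w, (nth w vs (hd (ed p)) \in A) != (w \in A) &
    [/\ hd (ed p) < vidx vs w, p \in backward vs E w & p \notin Dk k vs E w].
Proof.
move=> p_lt /andP[/set0Pn[x /setIP[x_ed xA]] /set0Pn[y /setDP[y_ed yA]]] lost.
set u := nth x vs (hd (ed p)).
have u_head : is_head vs u (ed p) := is_head_nth vs_all x x_ed.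
have u_ed' : u \in ed' p by rewrite in_edge' u_head orbT andbT; case/andP: u_head.
pose w := if u \in A then y else x.
have w_ed : w \in ed p by rewrite /w; case: (u \in A).
have opp : (u \in A) != (w \in A) by rewrite /w; case: (u \in A); rewrite ?xA ?(negbTE yA).
have w_lost : w \notin ed' p by apply: contra lost => w_ed'; apply: crossesP u_ed' w_ed' opp.
move: w_lost; rewrite in_edge' w_ed negb_or => /andP[p_Dk not_head].
have hd_lt : hd (ed p) < vidx vs w.
  rewrite ltn_neqAle head_idx_le // andbT eq_sym.
  by move: not_head; rewrite (is_headE vs_all) w_ed.
exists w; last by split; rewrite // in_backward p_lt w_ed.
by rewrite (set_nth_default x) // (ltn_trans hd_lt (vidx_lt vs_all w)).
Qed.

Lemma trace_cut_le_cut_Hk : trace_cut setT <= cut (Hk k vs E) A.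
Proof.
rewrite /cut /Hk count_map count_filter; apply: sub_count => p /=.
by rewrite setIT => crossing; rewrite (crosses_card crossing) andbT.
Qed.

Lemma cut_count : cut E A = count (fun p => crosses A (ed p)) (iota 0 (size E)).
Proof. by rewrite /cut -[in LHS](mkseq_nth set0 E) count_map. Qed.

End HkCut.

Theorem mainTheorem2 (V : finType) (E : seq {set V}) (vs : seq V) (k : nat) :
  uniq vs -> (forall v : V, v \in vs) ->
  MA_ordering E vs ->
  head_ordering vs E ->
  forall A : {set V}, minn k (cut E A) <= cut (Hk k vs E) A.
Proof.
move=> vs_uniq vs_all vs_MA E_head A; apply: leq_trans (trace_cut_le_cut_Hk E vs k A).
have [|kept] := boolP (has (fun p => crosses A (nth set0 E p) && ~~ crosses A (edge' k vs E p))
                           (iota 0 (size E))).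
  case/hasP => p; rewrite mem_iota => /andP[_ p_lt] /andP[crossing lost].
  have [w opp [hd_lt p_back p_Dk]] := lost_edge_witness vs_all p_lt crossing lost.
  apply: leq_trans (geq_minl _ _) (leq_trans (Dk_before_full E_head p_back p_Dk) _).
  apply: leq_trans (Dk_before_le_trace_cut k vs_uniq vs_all vs_MA E_head hd_lt opp) _.
  exact/trace_cutS/subsetT.
apply: leq_trans (geq_minr _ _) _; rewrite cut_count; apply: sub_in_count => p p_in crossing.
by move/hasPn/(_ p p_in): kept; rewrite crossing negbK setIT.
Qed.
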